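(* There exist 4-GDDs of types $28^9 19^1$, $28^9 25^1$ and $28^9 31^1$.
   Context: For a set $K$ of positive integers, a $K$-GDD (group divisible design) is a triple $(V,\mathcal G,\mathcal B)$ where $V$ is a finite set, $\mathcal G$ is a partition of $V$ into subsets called groups, $\mathcal B$ is a nonempty collection of subsets of $V$ (blocks) with sizes in $K$, such that every pair of points from distinct groups lies in exactly one block and no pair of points from the same group lies in any block. A $k$-GDD means a $\{k\}$-GDD. Type $g^u m^1$ means $u$ groups of size $g$ and one group of size $m$. *)

From mathcomp Require Import all_boot.
Set Implicit Arguments. Unset Strict Implicit. Unset Printing Implicit Defensive.

Definition is_GDD (T : finType) (K : pred nat)
    (G : {set {set T}}) (B : {set {set T}}) : Prop :=
  [/\ partition G [set: T],
      B != set0,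
      (forall b, b \in B -> K #|b|),
      (forall x y : T, x != y -> pblock G x != pblock G y ->
         #|[set b in B | (x \in b) && (y \in b)]| = 1) &
      (forall x y : T, x != y -> pblock G x = pblock G y ->
         forall b, b \in B -> ~~ ((x \in b) && (y \in b)))].

Definition is_kGDD (T : finType) (k : nat) G B := @is_GDD T (pred1 k) G B.

Definition has_type_gum (T : finType) (G : {set {set T}}) (g u m : nat) : Prop :=
  perm_eq [seq #|A| | A : {set T} in G] (rcons (nseq u g) m).

Definition exists_kGDD_gum (k g u m : nat) : Prop :=
  exists (T : finType) (G B : {set {set T}}),
    is_kGDD k G B /\ has_type_gum G g u m.

From mathcomp Require Import all_boot.
From Corelib Require Import BinNums NatDef.
Set Implicit Arguments. Unset Strict Implicit. Unset Printing Implicit Defensive.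

(* The three 4-GDDs of types 28^9 m^1 (m = 19, 25, 31) are built on the
   point set (Z_126 x Z_2) u {oo} u {oo_(i,j) | i < (m-1)/3, j in Z_3}: the
   groups of Z_126 x Z_2 are the classes of the first coordinate modulo 9
   (9 groups of size 28), and the infinite points form the last group of
   size m.  The blocks are the orbits of a list of base blocks under Z_126,
   which acts by translation on Z_126 x Z_2, fixes oo and acts on the
   indices j of the oo_(i,j) through Z_126 -> Z_3.

   The key criterion is local: a
   family of duplicate-free blocks covers every pair from distinct groups
   once and no pair inside a group as soon as, for every point x, the points sharing a
   block with x, counted with multiplicity, are exactly the points outside
   the group of x. *)

(* Points are encoded as binary numbers, so that the certificates are
   checked quickly by vm_compute. *)
Definition enc (n : nat) : N := bin_of_nat n.

Lemma enc_inj : injective enc.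
Proof. exact: (can_inj bin_of_natK). Qed.

Definition neighbours (T : eqType) (blocks : seq (seq T)) (x : T) : seq T :=
  flatten [seq [seq z <- s | z != x] | s <- blocks & x \in s].

Lemma count_neighbours (T : eqType) (blocks : seq (seq T)) (x y : T) :
  y != x -> all uniq blocks ->
  count_mem y (neighbours blocks x) =
  count (fun s => (x \in s) && (y \in s)) blocks.
Proof.
move=> yx; elim: blocks => [|s blocks IH] //= /andP[uniq_s uniq_blocks].
rewrite /neighbours /=; case: (x \in s) => /=; last by rewrite -IH.
rewrite count_cat -/(neighbours blocks x) IH // count_uniq_mem ?filter_uniq //.
by rewrite mem_filter yx.
Qed.

Lemma ord_in_iota (v : nat) (x : 'I_v) : val x \in iota 0 v.
Proof. by rewrite mem_iota ltn_ord. Qed.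

Lemma card_ord_pred (v : nat) (P : pred nat) :
  #|[set x : 'I_v | P x]| = count P (iota 0 v).
Proof.
rewrite cardE /enum_mem size_filter -val_enum_ord count_map -enumT.
by apply: eq_count => x; rewrite /= inE.
Qed.

Lemma card_set_short_seq (T : finType) (s : seq {set T}) :
  size s <= 1 -> #|[set A | A \in s]| = size s.
Proof.
move=> short_s; rewrite cardsE; apply/card_uniqP.
by case: s short_s => [|A [|]].
Qed.

Section Certificate.

(* The design lives on 'I_v; grp labels the points by the ng group indices
   and blocks lists the blocks as sequences of encoded points. *)
Variables (v ng : nat) (grp : nat -> nat) (blocks : seq (seq N)).

Definition blocks_ok : bool :=
  all (fun s => [&& size s == 4, uniq s & all (fun z => nat_of_bin z < v) s])
      blocks.

Definition neighbours_ok : bool :=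
  all (fun x => sort N.leb (neighbours blocks (enc x)) ==
                [seq enc y | y <- iota 0 v & grp y != grp x])
      (iota 0 v).

Definition groups_ok (sizes : seq nat) : bool :=
  [&& all (fun x => grp x < ng) (iota 0 v), all (leq 1) sizes &
      [seq count (fun y => grp y == i) (iota 0 v) | i <- iota 0 ng] == sizes].

Definition certificate (sizes : seq nat) : bool :=
  [&& blocks != [::], blocks_ok, neighbours_ok & groups_ok sizes].

Definition point_set (s : seq N) : {set 'I_v} := [set x : 'I_v | enc x \in s].

Definition cert_groups : {set {set 'I_v}} :=
  preim_partition (fun x : 'I_v => grp x) [set: 'I_v].

Definition cert_blocks : {set {set 'I_v}} := [set b | b \in map point_set blocks].

Lemma cert_groups_partition : partition cert_groups [set: 'I_v].
Proof. exact: preim_partitionP. Qed.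

Lemma same_cert_group (x y : 'I_v) :
  (pblock cert_groups x == pblock cert_groups y) = (grp x == grp y).
Proof.
have mem_pb (a b : 'I_v) : (b \in pblock cert_groups a) = (grp a == grp b).
  by rewrite pblock_equivalence_partition // ?inE //; split=> // /eqP ->.
apply/eqP/idP => [pb_xy | /eqP g_xy]; last by apply/setP => z; rewrite !mem_pb g_xy.
by rewrite -mem_pb pb_xy mem_pblock (cover_partition cert_groups_partition) inE.
Qed.

Lemma card_point_set (s : seq N) :
  uniq s -> all (fun z => nat_of_bin z < v) s -> #|point_set s| = size s.
Proof.
move=> uniq_s /allP s_lt_v.
rewrite (card_ord_pred v (fun n => enc n \in s)) -size_filter -(size_map enc).
apply/perm_size/uniq_perm => //.
  by rewrite (map_inj_uniq enc_inj) filter_uniq ?iota_uniq.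
move=> z; apply/mapP/idP => [[n] | z_s]; first by rewrite mem_filter => /andP[? _] ->.
exists (nat_of_bin z); last by rewrite /enc nat_of_binK.
by rewrite mem_filter mem_iota /enc nat_of_binK z_s /= s_lt_v.
Qed.

Definition pair_count (x y : 'I_v) : nat :=
  count (fun s => (enc x \in s) && (enc y \in s)) blocks.

Lemma pair_count_group (x y : 'I_v) :
  blocks_ok -> neighbours_ok -> x != y -> pair_count x y = (grp x != grp y).
Proof.
move=> /allP ok_blocks /allP ok_nbrs xy.
have uniq_blocks : all uniq blocks.
  by apply/allP => s /ok_blocks /and3P[].
have enc_xy : enc y != enc x.
  by apply: contra xy => /eqP /enc_inj /val_inj ->.
rewrite /pair_count -count_neighbours //.
have /eqP sorted_nbrs := ok_nbrs x (ord_in_iota x).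
rewrite -(permP (permEl (perm_sort N.leb _))) sorted_nbrs.
rewrite count_uniq_mem; last by rewrite (map_inj_uniq enc_inj) filter_uniq ?iota_uniq.
by rewrite (mem_map enc_inj) mem_filter ord_in_iota andbT eq_sym.
Qed.

(* The blocks through two points are the images of the listed blocks
   through them; at most one is listed, so they have the same number. *)
Lemma card_blocks_through (x y : 'I_v) : pair_count x y <= 1 ->
  #|[set b in cert_blocks | (x \in b) && (y \in b)]| = pair_count x y.
Proof.
rewrite /pair_count; set P := fun s => (enc x \in s) && (enc y \in s).
have -> : [set b in cert_blocks | (x \in b) && (y \in b)] =
          [set b | b \in map point_set (filter P blocks)].
  apply/setP => b; rewrite !inE; apply/andP/mapP => [[/mapP[s s_in ->]] | [s]].
    by rewrite /point_set !inE => P_s; exists s; rewrite // mem_filter s_in andbT.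
  by rewrite mem_filter => /andP[P_s s_in ->]; rewrite map_f // /point_set !inE.
by rewrite -size_filter -(size_map point_set) => /card_set_short_seq.
Qed.

Lemma certificate_kGDD :
  blocks != [::] -> blocks_ok -> neighbours_ok -> is_kGDD 4 cert_groups cert_blocks.
Proof.
move=> nonempty ok_blocks ok_nbrs.
have count_xy (x y : 'I_v) : x != y -> pair_count x y = (grp x != grp y).
  exact: pair_count_group.
split.
- exact: cert_groups_partition.
- have [s0 s0_in] : exists s0, s0 \in blocks.
    by case: blocks nonempty => [|s0 ?] // _; exists s0; rewrite mem_head.
  by apply/set0Pn; exists (point_set s0); rewrite inE map_f.
- move=> b; rewrite inE => /mapP[s s_in ->] /=.
  have /and3P[size_s uniq_s s_lt_v] := allP ok_blocks s s_in.
  by rewrite card_point_set.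
- move=> x y xy; rewrite same_cert_group => g_xy.
  have count1 : pair_count x y = 1 by rewrite count_xy // g_xy.
  by rewrite card_blocks_through count1.
- move=> x y xy /eqP; rewrite same_cert_group => g_xy b.
  rewrite inE => /mapP[s s_in ->]; rewrite /point_set !inE.
  apply/negP => P_s.
  have : 0 < pair_count x y by rewrite -has_count; apply/hasP; exists s.
  by rewrite count_xy // g_xy.
Qed.

Definition group_of (i : nat) : {set 'I_v} := [set x : 'I_v | grp x == i].

Lemma cert_groups_enum :
  (forall x : 'I_v, grp x < ng) ->
  (forall i, i < ng -> exists x : 'I_v, grp x = i) ->
  perm_eq (enum cert_groups) (map group_of (iota 0 ng)).
Proof.
move=> grp_lt grp_onto; apply: uniq_perm; first exact: enum_uniq.
  rewrite map_inj_in_uniq ?iota_uniq // => i j; rewrite !mem_iota /= => lt_i _ e_ij.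
  have [x gx] := grp_onto i lt_i.
  have : x \in group_of i by rewrite inE gx.
  by rewrite e_ij inE gx => /eqP.
move=> A; rewrite mem_enum; apply/imsetP/mapP => [[x _ ->] | [i lt_i ->]].
  exists (grp x); first by rewrite mem_iota grp_lt.
  by apply/setP => z; rewrite !inE eq_sym.
rewrite mem_iota /= in lt_i; have [x gx] := grp_onto i lt_i.
by exists x; rewrite ?inE //; apply/setP => z; rewrite !inE gx eq_sym.
Qed.

Lemma certificate_type (sizes : seq nat) :
  groups_ok sizes -> perm_eq [seq #|A| | A : {set 'I_v} in cert_groups] sizes.
Proof.
case/and3P=> /allP grp_lt /allP sizes_pos /eqP count_sizes.
have card_group i : #|group_of i| = count (fun y => grp y == i) (iota 0 v).
  exact: (card_ord_pred v (fun n => grp n == i)).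
have grp_onto i : i < ng -> exists x : 'I_v, grp x = i.
  move=> lt_i; have size_sizes : size sizes = ng by rewrite -count_sizes size_map size_iota.
  have := sizes_pos _ (mem_nth 0 (leq_trans lt_i (eq_leq (esym size_sizes)))).
  rewrite -count_sizes (nth_map 0) ?size_iota // nth_iota // add0n -has_count.
  by case/hasP=> y; rewrite mem_iota /= => lt_y /eqP gy; exists (Ordinal lt_y).
have := perm_map (fun A : {set 'I_v} => #|A|)
                 (cert_groups_enum (fun x => grp_lt x (ord_in_iota x)) grp_onto).
by rewrite -map_comp -count_sizes; under [map _ (iota _ _)]eq_map do rewrite /= card_group.
Qed.

End Certificate.

Lemma certificate_sound (v ng : nat) (grp : nat -> nat) (blocks : seq (seq N))
    (g u m : nat) :
  certificate v ng grp blocks (rcons (nseq u g) m) -> exists_kGDD_gum 4 g u m.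
Proof.
case/and4P=> nonempty ok_blocks ok_nbrs ok_groups.
exists 'I_v, (cert_groups v grp), (cert_blocks v blocks); split.
  exact: certificate_kGDD.
exact: certificate_type ok_groups.
Qed.

(* The point p < 252 stands for (p mod 126, p div 126) in Z_126 x Z_2,
   the point 252 for oo, and 253 + 3 i + j for oo_(i,j); shift g is the
   action of g in Z_126 on these points. *)
Definition shift (g p : nat) : nat :=
  if p < 252 then (p %/ 126) * 126 + (p %% 126 + g) %% 126
  else if p == 252 then 252
  else 253 + 3 * ((p - 253) %/ 3) + ((p - 253) %% 3 + g) %% 3.

(* The group label: the class modulo 9 of the Z_126 coordinate (9 divides
   126, so it is invariant under shift), and 9 for the infinite points. *)
Definition label (p : nat) : nat := if p < 252 then (p %% 126) %% 9 else 9.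

Definition develop (n : nat) (base : seq (seq nat)) : seq (seq nat) :=
  flatten [seq [seq map (shift g) b | g <- iota 0 n] | b <- base].

(* Full orbits of the base blocks, plus the two short orbits (of length 42)
   of the blocks {oo, (0,k), (42,k), (84,k)}, k in Z_2. *)
Definition design_blocks (base : seq (seq nat)) : seq (seq nat) :=
  develop 126 base ++ develop 42 [:: [:: 252; 0; 42; 84]; [:: 252; 126; 168; 210]].

Definition base19 : seq (seq nat) := [:: [:: 0; 7; 28; 140]; [:: 0; 14; 49; 210]; [:: 0; 56; 147; 175]; [:: 0; 154; 224; 231]; [:: 0; 168; 182; 203]; [:: 28; 34; 228; 108]; [:: 28; 106; 192; 18]; [:: 8; 250; 87; 102]; [:: 62; 142; 123; 66]; [:: 168; 148; 144; 34]; [:: 168; 202; 234; 106]; [:: 55; 114; 52; 32]; [:: 1; 96; 88; 122]; [:: 241; 86; 218; 49]; [:: 151; 68; 146; 49]; [:: 113; 170; 91; 178]; [:: 41; 152; 91; 214]; [:: 190; 133; 177; 230]; [:: 244; 133; 159; 176]; [:: 207; 209; 240; 210]; [:: 171; 155; 222; 210]; [:: 210; 132; 50; 74]; [:: 210; 204; 104; 38]; [:: 110; 109; 121; 160]; [:: 2; 73; 103; 232]; [:: 180; 71; 30; 227]; [:: 198; 125; 12; 137]; [:: 108; 163; 22; 201]; [:: 18; 145; 76; 219]; [:: 219; 130; 104; 29]; [:: 201; 220; 50; 83]; [:: 253; 33; 4; 218]; [:: 253; 11; 240; 160]; [:: 256; 51; 94; 146]; [:: 256; 101; 222; 232]; [::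 259; 0; 109; 239]; [:: 259; 26; 165; 241]; [:: 262; 0; 73; 167]; [:: 262; 44; 129; 151]; [:: 265; 18; 16; 140]; [:: 265; 50; 243; 142]; [:: 268; 108; 124; 140]; [:: 268; 104; 135; 250]].
Definition base25 : seq (seq nat) := [:: [:: 0; 7; 28; 140]; [:: 0; 14; 49; 210]; [:: 0; 56; 147; 175]; [:: 0; 154; 224; 231]; [:: 0; 168; 182; 203]; [:: 68; 146; 22; 241]; [:: 86; 218; 76; 151]; [:: 116; 226; 169; 119]; [:: 80; 208; 223; 119]; [:: 86; 81; 103; 15]; [:: 68; 45; 121; 69]; [:: 79; 139; 21; 159]; [:: 61; 211; 21; 177]; [:: 151; 89; 77; 93]; [:: 241; 107; 77; 75]; [:: 209; 168; 207; 143]; [:: 155; 168; 171; 179]; [:: 177; 131; 224; 220]; [:: 159; 149; 224; 130]; [:: 218; 70; 41; 89]; [:: 146; 70; 113; 107]; [:: 26; 51; 18; 246]; [:: 44; 33; 108; 174]; [:: 148; 226; 12; 123]; [:: 202; 208; 30; 87]; [:: 196; 128; 71; 158]; [:: 196; 236; 125; 248]; [:: 214; 161; 100; 113]; [:: 178; 161; 82; 41]; [:: 253; 9; 88; 155]; [:: 253; 119; 174; 250]; [:: 256; 117; 52; 209]; [:: 256; 119; 246; 142]; [:: 259; 39; 13; 224]; [:: 259; 122; 141; 244]; [:: 262; 3; 85; 224]; [:: 262; 32; 195; 190]; [:: 265; 99; 40; 140]; [:: 265; 113; 186; 142]; [:: 268; 27; 58; 140]; [:: 268; 41; 150; 250];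 [:: 271; 21; 1; 233]; [:: 271; 2; 225; 154]; [:: 274; 21; 55; 215]; [:: 274; 110; 153; 154]].
Definition base31 : seq (seq nat) := [:: [:: 0; 7; 28; 140]; [:: 0; 14; 49; 210]; [:: 0; 56; 147; 175]; [:: 0; 154; 224; 231]; [:: 0; 168; 182; 203]; [:: 59; 191; 26; 70]; [:: 95; 173; 44; 70]; [:: 180; 79; 56; 127]; [:: 198; 61; 56; 181]; [:: 210; 236; 179; 176]; [:: 210; 128; 143; 230]; [:: 17; 200; 104; 91]; [:: 53; 164; 50; 91]; [:: 50; 4; 82; 213]; [:: 104; 94; 100; 249]; [:: 26; 99; 56; 149]; [:: 44; 27; 56; 131]; [:: 130; 226; 70; 248]; [:: 220; 208; 70; 158]; [:: 194; 153; 143; 231]; [:: 212; 225; 179; 231]; [:: 91; 75; 149; 67]; [:: 91; 93; 131; 31]; [:: 225; 139; 84; 128]; [:: 153; 211; 84; 236]; [:: 116; 97; 82; 148]; [:: 80; 43; 100; 202]; [:: 253; 36; 58; 143]; [:: 253; 107; 213; 166]; [:: 256; 90; 40; 179]; [:: 256; 89; 249; 184]; [:: 259; 93; 46; 203]; [:: 259; 29; 198; 196]; [:: 262; 75; 10; 203]; [:: 262; 83; 180; 196]; [:: 265; 0; 1; 173]; [:: 265; 38; 225; 154]; [:: 268; 0; 55; 191]; [:: 268; 74; 153; 154]; [:: 271; 87; 28; 179]; [:: 271; 23; 225; 202]; [:: 274; 123; 28; 143]; [:: 274; 5; 153; 148]; [:: 277; 114; 28; 248]; [:: 277; 2; 246;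 214]; [:: 280; 96; 28; 158]; [:: 280; 110; 174; 178]].

Definition design_certificate (m : nat) (base : seq (seq nat)) : bool :=
  certificate (252 + m) 10 label (map (map enc) (design_blocks base))
              (rcons (nseq 9 28) m).

Lemma design_certificate_sound (m : nat) (base : seq (seq nat)) :
  design_certificate m base -> exists_kGDD_gum 4 28 9 m.
Proof. exact: certificate_sound. Qed.

Theorem lemma2p6 :
  [/\ exists_kGDD_gum 4 28 9 19,
      exists_kGDD_gum 4 28 9 25 &
      exists_kGDD_gum 4 28 9 31].
Proof.
split.
- by apply: (@design_certificate_sound 19 base19); vm_compute.
- by apply: (@design_certificate_sound 25 base25); vm_compute.
- by apply: (@design_certificate_sound 31 base31); vm_compute.
Qed.
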